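(* Under the hypotheses of Theorem 4 (stated in the context), define $\bar{\boldsymbol\rho}_\star\in\mathbb C^N$ by $$(\bar{\boldsymbol\rho}_\star)_j=\sum_{q:\ \vec{\mathbf z}_q\in\mathcal B_r(\vec{\mathbf z}_j)}(\boldsymbol\rho_\star)_q\,\langle\mathbf g_j,\mathbf g_q\rangle\ \ \text{for } j\in\mathcal S,\qquad(\bar{\boldsymbol\rho}_\star)_j=0\ \ \text{for } j\notin\mathcal S.$$ Then $$\|\boldsymbol\rho-\bar{\boldsymbol\rho}_\star\|_1\le\frac{2\,\mathcal I(\mathcal Y)}{r}\,\|\boldsymbol\rho\|_1.$$
   Context: Let $W$ be a set (the imaging region) and $M\ge1$. For each $\vec{\mathbf y}\in W$ let $\mathbf g_{\vec{\mathbf y}}\in\mathbb C^M$ be a vector with $\|\mathbf g_{\vec{\mathbf y}}\|_2=1$. Let $\vec{\mathbf z}_1,\dots,\vec{\mathbf z}_N\in W$ be distinct (grid) points, write $\mathbf g_j=\mathbf g_{\vec{\mathbf z}_j}$, and let $\mathcal G\in\mathbb C^{M\times N}$ be the matrix with columns $\mathbf g_j$. Inner product: $\langle\mathbf u,\mathbf v\rangle=\mathbf u^H\mathbf v=\sum_i\overline{u_i}v_i$. $\|\cdot\|_1$ is the $\ell_1$ norm. Semi-metric: $\mathscr D(\vec{\mathbf y},\vec{\mathbf y}')=1-|\langle\mathbf g_{\vec{\mathbf y}},\mathbf g_{\vec{\mathbf y}'}\rangle|$; ball $\mathcal B_r(\vec{\mathbf y})=\{\vec{\mathbf y}'\in W:\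 \mathscr D(\vec{\mathbf y},\vec{\mathbf y}')<r\}$. Interaction coefficient: for a finite set $\mathcal Y\subset W$ and each $q$, let $\mathscr N(\vec{\mathbf z}_q)\in\mathcal Y$ be a point of $\mathcal Y$ minimizing $\mathscr D(\vec{\mathbf z}_q,\cdot)$ over $\mathcal Y$; then $\mathcal I(\mathcal Y)=\max_{q=1,\dots,N}\sum_{\vec{\mathbf y}\in\mathcal Y\setminus\{\mathscr N(\vec{\mathbf z}_q)\}}|\langle\mathbf g_{\vec{\mathbf y}},\mathbf g_q\rangle|$. Hypotheses of Theorem 4: $\mathcal S\subset\{1,\dots,N\}$ with $|\mathcal S|=s$; $\boldsymbol\rho\in\mathbb C^N$ supported in $\mathcal S$; $\mathbf d=\mathcal G\boldsymbol\rho$; $\mathcal Y=\{\vec{\mathbf z}_j:j\in\mathcal S\}$; $r\in(0,1)$ with the balls $\mathcal B_r(\vec{\mathbf z}_j)$, $j\in\mathcal S$, pairwise disjoint; $\boldsymbol\rho_\star$ is a minimizer of $\|\mathbf x\|_1$ over $\mathbf x\in\mathbb C^N$ subject to $\mathcal G\mathbf x=\mathbf d$. *)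

(* The complex field C is abstracted as an arbitrary
   numClosedFieldType R (C is one), with conjugation x^* and modulus `|x|. *)
From HB Require Import structures.
From mathcomp Require Import all_boot all_order all_algebra.
Set Implicit Arguments. Unset Strict Implicit. Unset Printing Implicit Defensive.
Import Order.TTheory GRing.Theory Num.Theory.
Local Open Scope ring_scope.

Section Defs.
Variable R : numClosedFieldType.

Definition inner (M : nat) (u v : 'I_M -> R) : R := \sum_(i < M) (u i)^* * v i.

Definition norm2sq (M : nat) (u : 'I_M -> R) : R := \sum_(i < M) `|u i| ^+ 2.

Definition l1 (N : nat) (x : 'I_N -> R) : R := \sum_(j < N) `|x j|.

Definition semid (W : Type) (M : nat) (g : W -> 'I_M -> R) (y y' : W) : R :=
  1 - `|inner (g y) (g y')|.

Definition Gapply (W : Type) (M N : nat) (g : W -> 'I_M -> R) (z : 'I_N -> W)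
  (x : 'I_N -> R) : 'I_M -> R := fun i => \sum_(j < N) g (z j) i * x j.

(* Interaction coefficient I(Y) for Y = {z_j : j in S}, where nn q is the
   chosen index in S with z_{nn q} = N(z_q). *)
Definition interaction (W : Type) (M N : nat) (g : W -> 'I_M -> R)
  (z : 'I_N -> W) (S : {set 'I_N}) (nn : 'I_N -> 'I_N) : R :=
  \big[Num.max/0]_(q < N)
     \sum_(j in S | j != nn q) `|inner (g (z j)) (g (z q))|.

Definition rhobar (W : Type) (M N : nat) (g : W -> 'I_M -> R)
  (z : 'I_N -> W) (S : {set 'I_N}) (r : R) (rs : 'I_N -> R) : 'I_N -> R :=
  fun j => if j \in S then
     \sum_(q < N | semid g (z j) (z q) < r) rs q * inner (g (z j)) (g (z q))
   else 0.

End Defs.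

From HB Require Import structures.
From mathcomp Require Import all_boot all_order all_algebra.
From mathcomp Require Import ring.
Import Order.TTheory GRing.Theory Num.Theory.
Set Implicit Arguments.
Unset Strict Implicit.
Local Open Scope ring_scope.

(* For j in S, pairing G rho_star = G rho with g_j writes rho_j as
   sum_q rho_star_q <g_j, g_q> minus cross terms sum_(k in S, k <> j)
   rho_k <g_j, g_k>, of total size at most I(Y) |rho|_1.  Hence rho_j minus
   bar rho_star_j only involves the atoms of rho_star outside B_r(z_j).  An atom
   q outside every ball has |<g_(N(z_q)), g_q>| <= 1 - r; comparing the same
   expansion with |rho_star|_1 <= |rho|_1 shows that the mass m of these atoms
   satisfies r m <= 2 I(Y) |rho|_1, and the error is at most
   I(Y) |rho_star|_1 + I(Y) |rho|_1 + (1 - r) m <= 2 I(Y) |rho|_1 / r. *)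

Lemma inner_self (R : numClosedFieldType) M (u : 'I_M -> R) :
  inner u u = norm2sq u.
Proof. by apply: eq_bigr => i _; rewrite normCKC. Qed.

Lemma inner_conj (R : numClosedFieldType) M (u v : 'I_M -> R) :
  inner v u = (inner u v)^*.
Proof.
rewrite /inner rmorph_sum; apply: eq_bigr => i _.
by rewrite rmorphM /= conjCK mulrC.
Qed.

Lemma norm_innerC (R : numClosedFieldType) M (u v : 'I_M -> R) :
  `|inner v u| = `|inner u v|.
Proof. by rewrite inner_conj norm_conjC. Qed.

Lemma norm_inner_le (R : numClosedFieldType) M (u v : 'I_M -> R) :
  `|inner u v| <= (norm2sq u + norm2sq v) / 2.
Proof.
apply: le_trans (ler_norm_sum _ _ _) _.
rewrite /norm2sq -big_split mulr_suml; apply: ler_sum => i _ /=.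
rewrite normrM norm_conjC ler_pdivlMr ?ltr0n // -subr_ge0.
have -> : `|u i| ^+ 2 + `|v i| ^+ 2 - `|u i| * `|v i| * 2 = (`|u i| - `|v i|) ^+ 2.
  by ring.
by rewrite -realEsqr rpredB // normr_real.
Qed.

Lemma inner_Gapply (R : numClosedFieldType) (W : Type) M N (g : W -> 'I_M -> R)
  (z : 'I_N -> W) (u : 'I_M -> R) (x : 'I_N -> R) :
  inner u (Gapply g z x) = \sum_(q < N) x q * inner u (g (z q)).
Proof.
rewrite /inner /Gapply; under eq_bigr do rewrite mulr_sumr.
rewrite exchange_big; apply: eq_bigr => q _; rewrite mulr_sumr.
by apply: eq_bigr => i _; rewrite [RHS]mulrC mulrA.
Qed.

Lemma ler_norm_sumB (R : numDomainType) (I : finType) (P Q : pred I) (F G : I -> R) :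
  `|\sum_(i | P i) F i - \sum_(i | Q i) G i|
    <= \sum_(i | P i) `|F i| + \sum_(i | Q i) `|G i|.
Proof. by apply: le_trans (ler_normB _ _) _; rewrite lerD ?ler_norm_sum. Qed.

Lemma ler_sum_subpred (R : numDomainType) (I : finType) (P Q : pred I) (F : I -> R) :
  (forall i, P i -> Q i) -> (forall i, Q i -> 0 <= F i) ->
  \sum_(i | P i) F i <= \sum_(i | Q i) F i.
Proof.
move=> PQ F0; rewrite [leRHS]big_mkcond [leLHS]big_mkcond.
apply: ler_sum => i _; case: (boolP (P i)) => [/PQ -> //| _].
by case: ifP => // /F0.
Qed.

Section NonnegMax.
Variables (R : numDomainType) (I : eqType) (F : I -> R).
Hypothesis F_ge0 : forall i, 0 <= F i.

Lemma bigmax_ge0 (s : seq I) : 0 <= \big[Num.max/0]_(i <- s) F i.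
Proof.
apply: (big_ind (fun x => 0 <= x)) => // x y x0 y0.
by rewrite comparable_le_max ?real_comparable ?ger0_real ?x0.
Qed.

Lemma le_bigmax_ge0 (s : seq I) i : i \in s -> F i <= \big[Num.max/0]_(j <- s) F j.
Proof.
elim: s => // a t IH; rewrite inE big_cons.
rewrite comparable_le_max ?real_comparable ?ger0_real ?bigmax_ge0 //.
by case/orP => [/eqP ->|/IH ->]; rewrite ?lexx ?orbT.
Qed.

End NonnegMax.

Section Corollary1.
Variables (R : numClosedFieldType) (W : Type) (M N : nat).
Variables (g : W -> 'I_M -> R) (z : 'I_N -> W) (S : {set 'I_N}).
Variables (rho rho_star : 'I_N -> R) (r : R) (nn : 'I_N -> 'I_N).

Hypothesis g_unit : forall y, norm2sq (g y) = 1.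
Hypothesis rho_supp : forall j, j \notin S -> rho j = 0.
Hypothesis r_gt0 : 0 < r.
Hypothesis r_lt1 : r < 1.
Hypothesis balls_disjoint : forall j k, j \in S -> k \in S -> j != k ->
  forall y, ~ (semid g (z j) y < r /\ semid g (z k) y < r).
Hypothesis G_rho_star : Gapply g z rho_star = Gapply g z rho.
Hypothesis rho_star_min :
  forall x, Gapply g z x = Gapply g z rho -> l1 rho_star <= l1 x.
Hypothesis nn_spec : forall q, nn q \in S /\
  forall j, j \in S -> semid g (z q) (z (nn q)) <= semid g (z q) (z j).

Local Notation gram j q := (inner (g (z j)) (g (z q))).
Local Notation near j q := (semid g (z j) (z q) < r).
Local Notation IY := (interaction g z S nn).
(* By [nn_of_near], z_q lies in some ball iff it lies in that of [nn q]. *)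
Local Notation far_mass :=
  (\sum_q `|rho_star q| * (~~ near (nn q) q)%:R).

Lemma gram_diag j : gram j j = 1.
Proof. by rewrite inner_self g_unit. Qed.

Lemma norm_gram_le1 j q : `|gram j q| <= 1.
Proof.
by apply: le_trans (norm_inner_le _ _) _; rewrite !g_unit -[1 + 1]/(2 : R) divff ?pnatr_eq0.
Qed.

Lemma nn_of_near j q : j \in S -> near j q -> nn q = j.
Proof.
move=> jS near_jq; have [nnS nn_min] := nn_spec q.
apply/eqP; apply: contraT => nn_j.
case: (balls_disjoint nnS jS nn_j (y := z q)); split=> //.
by rewrite /semid norm_innerC (le_lt_trans (nn_min j jS)) // /semid norm_innerC.
Qed.

Lemma nn_centre k : k \in S -> nn k = k.
Proof. by move=> kS; apply: nn_of_near; rewrite // /semid gram_diag normr1 subrr. Qed.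

Lemma l1_rho_star_le : l1 rho_star <= l1 rho.
Proof. exact: rho_star_min. Qed.

Lemma interaction_ge0 : 0 <= IY.
Proof. by apply: bigmax_ge0 => q; apply: sumr_ge0. Qed.

Lemma le_interaction q : \sum_(j in S | j != nn q) `|gram j q| <= IY.
Proof.
by apply: le_bigmax_ge0 (mem_index_enum q) => p; apply: sumr_ge0.
Qed.

Lemma l1_rho : l1 rho = \sum_(j in S) `|rho j|.
Proof.
rewrite /l1 [RHS]big_mkcond; apply: eq_bigr => j _.
by case: ifPn => // /rho_supp ->; rewrite normr0.
Qed.

Lemma rho_centre j : j \in S ->
  rho j = \sum_q rho_star q * gram j q - \sum_(k in S | k != j) rho k * gram j k.
Proof.
move=> jS; have := congr1 (inner (g (z j))) G_rho_star; rewrite !inner_Gapply => ->.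
rewrite (bigID (fun k => k \in S)) /= [X in _ + X - _]big1 ?addr0; last first.
  by move=> k /rho_supp ->; rewrite mul0r.
by rewrite (bigD1 j) //= gram_diag mulr1; exact/esym/addrK.
Qed.

Lemma residual_centre j : j \in S ->
  rho j - rhobar g z S r rho_star j =
  \sum_(q | ~~ near j q) rho_star q * gram j q
    - \sum_(k in S | k != j) rho k * gram j k.
Proof.
by move=> jS; rewrite /rhobar jS (rho_centre jS) (bigID (fun q => near j q)) /=; ring.
Qed.

Lemma centre_sum_le (P : rel 'I_N) :
  \sum_(j in S) (\sum_(q | P j q) `|rho_star q * gram j q|
                   + \sum_(k in S | k != j) `|rho k * gram j k|)
  <= \sum_q `|rho_star q| * \sum_(j in S | P j q) `|gram j q| + IY * l1 rho.
Proof.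
rewrite big_split /=; apply: lerD.
  rewrite (exchange_big_dep xpredT) //=; apply: ler_sum => q _.
  by rewrite mulr_sumr; apply: ler_sum => j _; rewrite normrM.
rewrite (exchange_big_dep (mem S)) /=; last by move=> j k _ /andP[].
rewrite l1_rho mulr_sumr; apply: ler_sum => k kS.
under eq_bigr do rewrite normrM.
rewrite -mulr_sumr mulrC ler_wpM2r //.
apply: le_trans (le_interaction k); rewrite nn_centre //.
apply: ler_sum_subpred => [j /andP[-> /andP[_]]|j _] //; by rewrite eq_sym.
Qed.

Lemma l1_residual_le :
  l1 (fun j => rho j - rhobar g z S r rho_star j) <=
  \sum_q `|rho_star q| * \sum_(j in S | ~~ near j q) `|gram j q| + IY * l1 rho.
Proof.
apply: le_trans (centre_sum_le (fun j q => ~~ near j q)).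
rewrite /l1 [leRHS]big_mkcond; apply: ler_sum => j _.
case: ifPn => jS; first by rewrite residual_centre // ler_norm_sumB.
by rewrite /rhobar (negbTE jS) rho_supp // subrr normr0.
Qed.

Lemma l1_rho_le :
  l1 rho <= \sum_q `|rho_star q| * \sum_(j in S) `|gram j q| + IY * l1 rho.
Proof.
rewrite (eq_bigr (fun q => `|rho_star q| * \sum_(j in S | true) `|gram j q|)).
  apply: le_trans (centre_sum_le (fun _ _ => true)).
  by rewrite l1_rho; apply: ler_sum => j jS; rewrite rho_centre // ler_norm_sumB.
by move=> q _; under [in RHS]eq_bigl do rewrite andbT.
Qed.

Lemma norm_gram_nn_le q : `|gram (nn q) q| <= 1 - r * (~~ near (nn q) q)%:R.
Proof.
case: (boolP (near (nn q) q)) => [_|far_nn]; first by rewrite mulr0 subr0 norm_gram_le1.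
move: far_nn; rewrite mulr1 /semid -real_leNgt ?(gtr0_real r_gt0) ?rpredB ?real1 ?normr_real //.
by rewrite lerBrDr addrC -lerBrDr.
Qed.

Lemma weight_le q :
  \sum_(j in S) `|gram j q| <= 1 + IY - r * (~~ near (nn q) q)%:R.
Proof.
rewrite (bigD1 (nn q)) ?(nn_spec q).1 //= addrAC.
exact: lerD (norm_gram_nn_le q) (le_interaction q).
Qed.

Lemma far_weight_le q :
  \sum_(j in S | ~~ near j q) `|gram j q| <= IY + (1 - r) * (~~ near (nn q) q)%:R.
Proof.
case: (boolP (near (nn q) q)) => [nn_near|far_nn].
  rewrite mulr0 addr0; apply: le_trans (le_interaction q).
  apply: ler_sum_subpred => [j /andP[-> far_j]|j _] //=.
  by apply: contraNneq far_j => ->.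
have no_near j : j \in S -> ~~ near j q.
  by move=> jS; apply: contraNN far_nn => near_jq; rewrite (nn_of_near jS near_jq).
rewrite (eq_bigl (mem S)) => [|j]; last exact/andb_idr/no_near.
apply: le_trans (weight_le q) _.
by rewrite (negbTE far_nn) !mulr1 (addrC 1) addrA.
Qed.

Lemma l1_residual_le_mass :
  l1 (fun j => rho j - rhobar g z S r rho_star j)
    <= l1 rho_star * IY + (1 - r) * far_mass + IY * l1 rho.
Proof.
apply: le_trans l1_residual_le _; rewrite lerD2r /l1 mulr_suml mulr_sumr -big_split /=.
apply: ler_sum => q _; rewrite mulrCA -mulrDr.
exact: ler_wpM2l (far_weight_le q).
Qed.

Lemma l1_rho_le_mass :
  l1 rho <= l1 rho_star * (1 + IY) - r * far_mass + IY * l1 rho.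
Proof.
apply: le_trans l1_rho_le _; rewrite lerD2r /l1 mulr_suml mulr_sumr -sumrB /=.
apply: ler_sum => q _; rewrite mulrCA -mulrBr.
exact: ler_wpM2l (weight_le q).
Qed.

Lemma r_far_mass_le : r * far_mass <= 2 * IY * l1 rho.
Proof.
have rho_star_le := l1_rho_star_le.
have rho_le := l1_rho_le_mass.
rewrite -subr_ge0.
have -> : 2 * IY * l1 rho - r * far_mass =
  (l1 rho_star * (1 + IY) - r * far_mass + IY * l1 rho - l1 rho)
    + (1 + IY) * (l1 rho - l1 rho_star) by ring.
by rewrite addr_ge0 ?mulr_ge0 ?subr_ge0 ?addr_ge0 ?interaction_ge0.
Qed.

Lemma l1_residual_le_interaction :
  l1 (fun j => rho j - rhobar g z S r rho_star j) <= 2 * IY / r * l1 rho.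
Proof.
have rho_star_le := l1_rho_star_le.
have residual_le := l1_residual_le_mass.
have mass_le := r_far_mass_le.
rewrite mulrAC ler_pdivlMr // -subr_ge0.
set L := l1 _ in residual_le *.
have -> : 2 * IY * l1 rho - L * r =
  r * (l1 rho_star * IY + (1 - r) * far_mass + IY * l1 rho - L)
    + r * IY * (l1 rho - l1 rho_star)
    + (1 - r) * (2 * IY * l1 rho - r * far_mass) by ring.
by rewrite !addr_ge0 // !mulr_ge0 ?interaction_ge0 ?subr_ge0 ?(ltW r_gt0) ?(ltW r_lt1).
Qed.

End Corollary1.

Theorem corollary1 (R : numClosedFieldType) (W : Type) (M N : nat)
  (g : W -> 'I_M -> R) (z : 'I_N -> W) (S : {set 'I_N})
  (rho rho_star : 'I_N -> R) (r : R) (nn : 'I_N -> 'I_N) :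
  (0 < M)%N ->
  (forall y : W, norm2sq (g y) = 1) ->
  injective z ->
  (forall j, j \notin S -> rho j = 0) ->
  0 < r -> r < 1 ->
  (forall j k, j \in S -> k \in S -> j != k ->
     forall y : W, ~ (semid g (z j) y < r /\ semid g (z k) y < r)) ->
  Gapply g z rho_star = Gapply g z rho ->
  (forall x : 'I_N -> R, Gapply g z x = Gapply g z rho -> l1 rho_star <= l1 x) ->
  (forall q, nn q \in S /\
     forall j, j \in S -> semid g (z q) (z (nn q)) <= semid g (z q) (z j)) ->
  l1 (fun j => rho j - rhobar g z S r rho_star j)
    <= 2 * interaction g z S nn / r * l1 rho.
Proof.
move=> _ g_unit _ rho_supp r_gt0 r_lt1 balls_disjoint G_rho_star rho_star_min nn_spec.
exact: l1_residual_le_interaction.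
Qed.
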